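(* Let $t\ge1$ and $n=t+1$. The gadget $\mathtt{SecScalarMult}$ defined below is $t$-SNI secure. $\mathtt{SecScalarMult}$ takes as input a Boolean sharing $(\mathbf{x}_i)_{1\le i\le n}$ of a vector $\mathbf{x}\in\mathbb{F}_q^l$ and a multiplicative sharing $(p_i)_{1\le i\le n}$ of a coefficient $p\in\mathbb{F}_q^*$, and outputs a Boolean sharing $(\mathbf{y}_i)$ of $p\cdot\mathbf{x}$, computed as follows: set $(\mathbf{y}_i):=(\mathbf{x}_i)$; for $j=1,\dots,n$: for $k=1,\dots,l$: set $\mathbf{y}[k]_i := p_j\cdot\mathbf{y}[k]_i$ for every $i$, then set $(\mathbf{y}[k]_i):=\mathtt{Refresh}((\mathbf{y}[k]_i))$. Return $(\mathbf{y}_i)$.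
   Context: A Boolean sharing of $x\in\mathbb{F}_q$ is a tuple $(x_1,\dots,x_n)$ with $x=x_1+\cdots+x_n$ (field addition); vectors are shared coordinate-wise, and $\mathbf{v}[k]$ is the $k$-th coordinate. A multiplicative sharing of $p\in\mathbb{F}_q^*$ is $(p_1,\dots,p_n)\in(\mathbb{F}_q^* )^n$ with $p=p_1\cdots p_n$. $\mathtt{Refresh}((x_i))$: set $y_i:=x_i$; for $i=2,\dots,n$: sample $r$ uniformly from $\mathbb{F}_q$, set $y_1:=y_1+r$ and $y_i:=y_i-r$; return $(y_i)$. Probing model: an adversary may place probes on intermediate values (internal wires) of a gadget and on its output shares. A gadget with one output sharing and some input sharings is $t$-NI (resp. $t$-SNI) secure if any set of at most $t_1$ probes on internal wires and $t_2$ probes on output shares, with $t_1+t_2\le t$, can be perfectly simulated using at most $t_1+t_2$ (resp. $t_1$) shares of each of its input sharings. *)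

From mathcomp Require Import all_boot all_order all_algebra.
Set Implicit Arguments. Unset Strict Implicit. Unset Printing Implicit Defensive.
Import GRing.Theory.
Local Open Scope ring_scope.

(* Shares are indexed by 'I_n with n = t.+1 (0-based: share 0 is the paper's share 1). *)

(* One iteration of Refresh, for the paper's share index i = m+2 (0-based: lift ord0 m).
   Wires emitted: the fresh random r, the new first share, the new i-th share. *)
Definition refresh_step (F : finFieldType) (t : nat) (c : 'I_t -> F)
    (acc : seq F * ('I_t.+1 -> F)) (m : 'I_t) : seq F * ('I_t.+1 -> F) :=
  let r := c m in
  let y := acc.2 in
  let i : 'I_t.+1 := lift ord0 m in
  let y' := fun a : 'I_t.+1 =>
      if a == ord0 then y a + r else if a == i then y a - r else y a in
  (acc.1 ++ [:: r; y' ord0; y' i], y').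

Definition refresh (F : finFieldType) (t : nat) (c : 'I_t -> F) (y : 'I_t.+1 -> F)
  : seq F * ('I_t.+1 -> F) :=
  foldl (refresh_step c) ([::], y) (enum 'I_t).

(* Random coins of SecScalarMult: coins (j, k, m) are the samples of the
   Refresh performed at iteration (j, k). *)
Definition ssm_coins (F : finFieldType) (t l : nat) : finType :=
  {ffun 'I_t.+1 * 'I_l * 'I_t -> F}.

(* State: Y k i = y[k]_i. *)
Definition ssm_step (F : finFieldType) (t l : nat) (p : {ffun 'I_t.+1 -> F})
    (c : ssm_coins F t l)
    (acc : seq F * ('I_l -> 'I_t.+1 -> F)) (jk : 'I_t.+1 * 'I_l)
  : seq F * ('I_l -> 'I_t.+1 -> F) :=
  let j := jk.1 in let k := jk.2 in
  let Y := acc.2 in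
  let z := fun i : 'I_t.+1 => p j * Y k i in
  let rr := refresh (fun m => c (j, k, m)) z in
  (acc.1 ++ [seq z i | i <- enum 'I_t.+1] ++ rr.1,
   fun k' => if k' == k then rr.2 else Y k').

(* Full execution of SecScalarMult on input shares x (x i = x_i in F^l) and
   multiplicative shares p.  Returns the trace of all internal wires (input shares
   read, every product, every random value and every refreshed share) and the
   final state (output shares, Y k i = y[k]_i). *)
Definition ssm (F : finFieldType) (t l : nat)
    (x : {ffun 'I_t.+1 -> {ffun 'I_l -> F}}) (p : {ffun 'I_t.+1 -> F})
    (c : ssm_coins F t l) : seq F * ('I_l -> 'I_t.+1 -> F) :=
  foldl (ssm_step p c)
    ([seq x i k | i <- enum 'I_t.+1, k <- enum 'I_l] ++ [seq p j | j <- enum 'I_t.+1],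
     fun k i => x i k)
    [seq (j, k) | j <- enum 'I_t.+1, k <- enum 'I_l].

(* Values observed by an adversary probing internal wires P (positions in the trace)
   and output shares O (each a whole vector share y_i). *)
Definition ssm_obs (F : finFieldType) (t l : nat) (P : seq nat) (O : {set 'I_t.+1})
    (x : {ffun 'I_t.+1 -> {ffun 'I_l -> F}}) (p : {ffun 'I_t.+1 -> F})
    (c : ssm_coins F t l) : seq F :=
  let res := ssm x p c in
  [seq nth 0 res.1 w | w <- P] ++ [seq res.2 k i | i <- enum O, k <- enum 'I_l].

Definition ssm_prob (F : finFieldType) (t l : nat) (P : seq nat) (O : {set 'I_t.+1})
    (x : {ffun 'I_t.+1 -> {ffun 'I_l -> F}}) (p : {ffun 'I_t.+1 -> F}) (v : seq F) : rat :=
  (#|[set c : ssm_coins F t l | ssm_obs P O x p c == v]|)%:R / (#|ssm_coins F t l|)%:R.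

Definition share_mask (A : Type) (n : nat) (I : {set 'I_n}) (f : {ffun 'I_n -> A})
  : {ffun 'I_n -> option A} :=
  [ffun i => if i \in I then Some (f i) else None].

From mathcomp Require Import all_boot all_order all_algebra.
From Stdlib Require Import FunctionalExtensionality.
Set Implicit Arguments. Unset Strict Implicit. Unset Printing Implicit Defensive.
Import GRing.Theory.
Local Open Scope ring_scope.

(* By a hybrid argument it suffices that the distribution of the observations is unchanged
   when a single share [x a] (resp. [p j0]) that the simulator may not read is modified.
   Fix a coordinate [k]. With at most [t] probes, one of the [t + 1] iterations, [jfree k],
   has no probe on its multiplication nor on its Refresh ([jfree k = j0] when [p j0] is
   modified). Before it the modification only affects share [a], which no probe there
   reads; inside it the Refresh coins are shifted so that the whole difference moves to a
   share [bfree k] that is neither an output probe nor probed afterwards. The shift only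
   depends on earlier coins, hence is a bijection of the coins, and the two observation
   distributions coincide. *)

Lemma card_set_pmap (A : Type) (T : finType) (g : A -> option T) (s : seq A) :
  (#|[set i in pmap g s]| <= size s)%N.
Proof.
rewrite cardsE; apply: leq_trans (card_size _) _.
by rewrite size_pmap count_size.
Qed.

Lemma mem_set_pmap (A : eqType) (T : finType) (g : A -> option T) (s : seq A) w i :
  w \in s -> g w = Some i -> i \in [set i in pmap g s].
Proof. by move=> Hw Hg; rewrite inE mem_pmap -Hg map_f. Qed.

Lemma pick_notin (t : nat) (S : {set 'I_t.+1}) :
  (#|S| <= t)%N -> odflt ord0 [pick i | i \notin S] \notin S.
Proof.
move=> HS; case: pickP => [i -> //|HnS].
have : [set: 'I_t.+1] \subset S by apply/subsetP => i _; apply/negPn/negbT.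
by move/subset_leq_card; rewrite cardsT card_ord => /leq_trans/(_ HS); rewrite ltnn.
Qed.

(* The hybrid argument: change the shares outside [I] one at a time. *)
Lemma eq_share_mask (A R : Type) (n : nat) (I : {set 'I_n})
    (Q : {ffun 'I_n -> A} -> R) (d : A) :
  (forall (u u' : {ffun 'I_n -> A}) i0,
     i0 \notin I -> (forall i, i != i0 -> u' i = u i) -> Q u = Q u') ->
  forall u : {ffun 'I_n -> A}, Q u = Q [ffun i => odflt d (share_mask I u i)].
Proof.
move=> HQ u.
suff H (s : seq 'I_n) : Q u = Q [ffun i => if (i \in s) && (i \notin I) then d else u i].
  rewrite (H (enum 'I_n)); congr Q; apply/ffunP => i.
  by rewrite !ffunE mem_enum; case: (i \in I).
elim: s => [|i0 s ->]; first by congr Q; apply/ffunP => i; rewrite ffunE.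
have [HI|HnI] := boolP (i0 \in I).
  congr Q; apply/ffunP => i; rewrite !ffunE in_cons.
  by case: eqP => [->|]; rewrite ?HI ?andbF.
by apply: HQ HnI _ => i Hi; rewrite !ffunE in_cons (negbTE Hi).
Qed.

Section Agreement.
Variables (L T : Type) (G : L -> Prop).

Fixpoint agree (ls : seq L) (s s' : seq T) : Prop :=
  match ls, s, s' with
  | [::], [::], [::] => True
  | a :: ls1, u :: s1, u' :: s1' => (G a -> u = u') /\ agree ls1 s1 s1'
  | _, _, _ => False
  end.

Lemma agree_cat ls1 ls2 s1 s2 s1' s2' :
  agree ls1 s1 s1' -> agree ls2 s2 s2' -> agree (ls1 ++ ls2) (s1 ++ s2) (s1' ++ s2').
Proof.
elim: ls1 s1 s1' => [|a ls1 IH] [|u s1] [|u' s1'] //= [Ha H1] H2.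
by split => //; apply: IH.
Qed.

Lemma agree_size ls s s' : agree ls s s' -> size s = size ls /\ size s' = size ls.
Proof. by elim: ls s s' => [|a ls IH] [|u s] [|u' s'] //= [_ /IH[-> ->]]. Qed.

Lemma agree_nth ls s s' a0 x0 w : agree ls s s' -> (w < size ls)%N ->
  G (nth a0 ls w) -> nth x0 s w = nth x0 s' w.
Proof.
elim: ls s s' w => [|a ls IH] [|u s] [|u' s'] [|w] //= [Ha H] Hw HG.
  exact: Ha.
exact: IH.
Qed.

Lemma agree_map (A : Type) (h : A -> L) (f g : A -> T) (s : seq A) :
  (forall a, G (h a) -> f a = g a) -> agree (map h s) (map f s) (map g s).
Proof. by move=> H; elim: s => //= a s IH; split => //; apply: H. Qed.

Lemma agree_flatten (A : Type) (h : A -> seq L) (f g : A -> seq T) (s : seq A) :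
  (forall a, agree (h a) (f a) (g a)) ->
  agree (flatten (map h s)) (flatten (map f s)) (flatten (map g s)).
Proof. by move=> H; elim: s => //= a s IH; apply: agree_cat. Qed.

Lemma agree_allpairs (A B : Type) (h : A -> B -> L) (f g : A -> B -> T)
    (s1 : seq A) (s2 : seq B) :
  (forall a b, G (h a b) -> f a b = g a b) ->
  agree [seq h a b | a <- s1, b <- s2] [seq f a b | a <- s1, b <- s2]
        [seq g a b | a <- s1, b <- s2].
Proof. by move=> H; apply: agree_flatten => a; apply: agree_map => b; apply: H. Qed.

End Agreement.

Section Refresh.
Variables (F : finFieldType) (t : nat).
Local Notation n := t.+1.

Lemma refresh_step_sharesE (c : 'I_t -> F) ms tr (y : 'I_n -> F) a :
  (foldl (refresh_step c) (tr, y) ms).2 a =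
  if a == ord0 then y a + \sum_(m <- ms) c m
  else y a - \sum_(m <- ms | lift ord0 m == a) c m.
Proof.
elim: ms tr y => [|m ms IH] tr y /=.
  by rewrite !big_nil addr0 subr0; case: ifP.
rewrite IH !big_cons; case: (a =P ord0) => [->|Ha] /=; first by rewrite addrA.
rewrite (eq_sym (lift _ _)); case: (a =P lift ord0 m) => [->|//].
by rewrite opprD addrA.
Qed.

Lemma refreshE (c : 'I_t -> F) (y : 'I_n -> F) (m : 'I_t) :
  (refresh c y).2 ord0 = y ord0 + \sum_m c m /\
  (refresh c y).2 (lift ord0 m) = y (lift ord0 m) - c m.
Proof.
rewrite /refresh !refresh_step_sharesE eqxx eq_sym (negbTE (neq_lift _ _)).
rewrite big_enum; split=> //; congr (_ - _).
by rewrite big_enum_cond /= (eq_bigl (pred1 m)) ?big_pred1_eq.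
Qed.

(* Extra coins that cancel [D] on every share but [b]: the coin of share [lift ord0 m]
   absorbs [D] there, and the coin of share [b] makes the extra coins sum to [- D ord0],
   which cancels [D] on the first share. *)
Definition coin_shift (D : 'I_n -> F) (b : 'I_n) (m : 'I_t) : F :=
  if lift ord0 m == b then - (D ord0 + \sum_(m' | lift ord0 m' != b) D (lift ord0 m'))
  else D (lift ord0 m).

Lemma sum_coin_shift D mb : \sum_m coin_shift D (lift ord0 mb) m = - D ord0.
Proof.
rewrite (bigD1 mb) //= {1}/coin_shift eqxx.
rewrite (eq_bigl (fun m' => m' != mb)) => [|m']; last by rewrite (inj_eq (@lift_inj _ ord0)).
rewrite [X in _ + X](eq_bigr (fun m' => D (lift ord0 m'))) => [|m' Hm'].
  by rewrite opprD -addrA addNr addr0.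
by rewrite /coin_shift (inj_eq (@lift_inj _ ord0)) (negbTE Hm').
Qed.

Lemma refresh_coin_shift (c : 'I_t -> F) (y D : 'I_n -> F) b i : i != b ->
  (refresh (fun m => c m + coin_shift D b m) (fun a => y a + D a)).2 i = (refresh c y).2 i.
Proof.
case: (unliftP ord0 i) => [m ->|->] Hib.
  have [_ ->] := refreshE (fun m => c m + coin_shift D b m) (fun a => y a + D a) m.
  have [_ ->] := refreshE c y m.
  by rewrite /coin_shift (negbTE Hib) opprD addrACA subrr addr0.
case: (unliftP ord0 b) Hib => [mb ->|->]; last by rewrite eqxx.
move=> _; have [-> _] := refreshE (fun m => c m + coin_shift D (lift ord0 mb) m)
                          (fun a => y a + D a) mb.
have [-> _] := refreshE c y mb.
by rewrite big_split /= sum_coin_shift addrACA subrr addr0.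
Qed.

End Refresh.

Section SecScalarMult.
Variables (F : finFieldType) (t l : nat).
Local Notation n := t.+1.
Local Notation shares := {ffun 'I_n -> {ffun 'I_l -> F}}.
Local Notation coefs := {ffun 'I_n -> F}.
Local Notation coins := (ssm_coins F t l).
Local Notation next c y m := (refresh_step c ([::], y) m).2.

Section ClosedForm.
Variables (x : shares) (p : coefs) (c : coins).

Fixpoint ssm_state (j : nat) (k : 'I_l) : 'I_n -> F :=
  match j with
  | 0 => fun i => x i k
  | j'.+1 => (refresh (fun m => c (inord j', k, m))
                (fun i => p (inord j') * ssm_state j' k i)).2
  end.

Definition ssm_block (jk : 'I_n * 'I_l) : seq F :=
  let z := fun i => p jk.1 * ssm_state jk.1 jk.2 i in
  [seq z i | i <- enum 'I_n] ++ (refresh (fun m => c (jk.1, jk.2, m)) z).1.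

Definition ssm_inputs : seq F :=
  [seq x i k | i <- enum 'I_n, k <- enum 'I_l] ++ [seq p j | j <- enum 'I_n].

Definition ssm_schedule : seq ('I_n * 'I_l) := [seq (j, k) | j <- enum 'I_n, k <- enum 'I_l].

Lemma foldl_ssm_step_row (j : 'I_n) tr (ks : seq 'I_l) : uniq ks ->
  foldl (ssm_step p c) (tr, fun k => ssm_state j k) [seq (j, k) | k <- ks] =
  (tr ++ flatten [seq ssm_block (j, k) | k <- ks],
   fun k => if k \in ks then ssm_state j.+1 k else ssm_state j k).
Proof.
elim/last_ind: ks => [_|ks k IH]; first by rewrite /= cats0.
rewrite rcons_uniq => /andP[kN Hu].
rewrite !map_rcons foldl_rcons IH // flatten_rcons /ssm_step /= (negbTE kN).
congr pair; first by rewrite /ssm_block !catA.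
apply: functional_extensionality => k0; rewrite mem_rcons in_cons.
by case: eqP => [->|] //=; rewrite inord_val.
Qed.

Lemma ssmE : ssm x p c = (ssm_inputs ++ flatten [seq ssm_block jk | jk <- ssm_schedule],
                           fun k => ssm_state n k).
Proof.
pose rows J := [seq (j, k) | j <- take J (enum 'I_n), k <- enum 'I_l].
suff H J : (J <= n)%N ->
    foldl (ssm_step p c) (ssm_inputs, fun k => ssm_state 0 k) (rows J) =
    (ssm_inputs ++ flatten [seq ssm_block jk | jk <- rows J], fun k => ssm_state J k).
  by have := H n (leqnn _); rewrite /rows take_oversize ?size_enum_ord.
elim: J => [|J IH] HJ; first by rewrite /rows take0 /= cats0.
have HJ' : (J < size (enum 'I_n))%N by rewrite size_enum_ord.
rewrite /rows (take_nth ord0 HJ') -cats1 !allpairs_cat foldl_cat IH ?(ltnW HJ) //.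
rewrite /= cats0 map_cat flatten_cat catA.
set j := nth ord0 (enum 'I_n) J.
have <- : nat_of_ord j = J by rewrite /j -[J]/(nat_of_ord (Ordinal HJ)) nth_ord_enum.
rewrite foldl_ssm_step_row ?enum_uniq // -map_comp; congr pair.
by apply: functional_extensionality => k; rewrite mem_enum.
Qed.

End ClosedForm.

Lemma ssm_state_ext (x : shares) (p : coefs) (c c' : coins) J k :
  (forall j m, (j < J)%N -> c (inord j, k, m) = c' (inord j, k, m)) ->
  ssm_state x p c J k = ssm_state x p c' J k.
Proof.
elim: J => [|J IH] H //=.
rewrite IH => [|j m Hj]; last by apply: H; apply: ltnW.
by congr (refresh _ _).2; apply: functional_extensionality => m; apply: H.
Qed.

Inductive wire := WProd of 'I_n | WCoin of 'I_t | WHead of 'I_t | WTail of 'I_t.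
Inductive label := LabX of 'I_n & 'I_l | LabP of 'I_n | LabBlock of 'I_n & 'I_l & wire.

(* The [m]-th step of Refresh emits its coin, then the new share [ord0] ([WHead m]), then
   the new share [lift ord0 m] ([WTail m]). *)
Definition wire_share (w : wire) : option 'I_n :=
  match w with
  | WProd i => Some i | WCoin _ => None | WHead _ => Some ord0 | WTail m => Some (lift ord0 m)
  end.

Definition refresh_labels j k (m : 'I_t) :=
  [:: LabBlock j k (WCoin m); LabBlock j k (WHead m); LabBlock j k (WTail m)].

Definition block_labels (jk : 'I_n * 'I_l) :=
  [seq LabBlock jk.1 jk.2 (WProd i) | i <- enum 'I_n] ++
  flatten [seq refresh_labels jk.1 jk.2 m | m <- enum 'I_t].

Definition ssm_labels :=
  [seq LabX i k | i <- enum 'I_n, k <- enum 'I_l] ++ [seq LabP j | j <- enum 'I_n] ++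
  flatten [seq block_labels jk | jk <- ssm_schedule].

Definition refresh_wires_agree (G : label -> Prop) j k (c c' : 'I_t -> F) m
    (y y' : 'I_n -> F) :=
  [/\ G (LabBlock j k (WCoin m)) -> c m = c' m,
      G (LabBlock j k (WHead m)) -> next c y m ord0 = next c' y' m ord0 &
      G (LabBlock j k (WTail m)) -> next c y m (lift ord0 m) = next c' y' m (lift ord0 m)].

Lemma foldl_refresh_agree (G : label -> Prop) j k (c c' : 'I_t -> F)
    (R : ('I_n -> F) -> ('I_n -> F) -> Prop) :
  (forall m y y', R y y' ->
     R (next c y m) (next c' y' m) /\ refresh_wires_agree G j k c c' m y y') ->
  forall ms ls tr tr' y y', agree G ls tr tr' -> R y y' ->
  agree G (ls ++ flatten [seq refresh_labels j k m | m <- ms])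
      (foldl (refresh_step c) (tr, y) ms).1 (foldl (refresh_step c') (tr', y') ms).1 /\
  R (foldl (refresh_step c) (tr, y) ms).2 (foldl (refresh_step c') (tr', y') ms).2.
Proof.
move=> Hstep; elim => [|m ms IH] ls tr tr' y y' Hls HR /=; first by rewrite cats0.
have [HR' [Hcoin Hhead Htail]] := Hstep m y y' HR.
rewrite (catA ls (refresh_labels j k m)); apply: IH => //.
by apply: agree_cat => //=; do !split.
Qed.

Definition offset_at (a : 'I_n) (d : F) (y y' : 'I_n -> F) :=
  forall i, y' i = y i + (if i == a then d else 0).

Lemma offset_at_eq a d y y' i : offset_at a d y y' -> Some i != Some a \/ d = 0 -> y' i = y i.
Proof.
move=> Hy H; rewrite Hy; case: H => [Hi|->]; last by case: ifP; rewrite addr0.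
by rewrite ifN ?addr0 //; apply: contra Hi => /eqP ->.
Qed.

Lemma offset_at_next a d y y' (c : 'I_t -> F) m :
  offset_at a d y y' -> offset_at a d (next c y m) (next c y' m).
Proof.
move=> Hy i /=; rewrite !Hy.
by case: eqP => _; [|case: eqP => _]; case: (i == a); rewrite ?addr0 // addrAC.
Qed.

Section BlockAgreement.
Variables (G : label -> Prop) (x x' : shares) (p p' : coefs) (c c' : coins).
Variables (j : 'I_n) (k : 'I_l).
Let cj m := c (j, k, m).
Let cj' m := c' (j, k, m).

Lemma block_agree_offset a d :
  p' j = p j -> cj' =1 cj ->
  offset_at a d (ssm_state x p c j k) (ssm_state x' p' c' j k) ->
  (forall w, G (LabBlock j k w) -> wire_share w != Some a \/ d = 0) ->
  agree G (block_labels (j, k)) (ssm_block x p c (j, k)) (ssm_block x' p' c' (j, k)) /\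
  offset_at a (p j * d) (ssm_state x p c j.+1 k) (ssm_state x' p' c' j.+1 k).
Proof.
move=> Hp /functional_extensionality Hc Hst HG.
set z := fun i => p j * ssm_state x p c j k i.
set z' := fun i => p' j * ssm_state x' p' c' j k i.
have Hz : offset_at a (p j * d) z z'.
  by move=> i; rewrite /z /z' Hp Hst mulrDr; case: (i == a); rewrite ?mulr0.
have Hd w : G (LabBlock j k w) -> wire_share w != Some a \/ p j * d = 0.
  by move/HG => [|->]; [left|right; rewrite mulr0].
have Hstep m y y' : offset_at a (p j * d) y y' ->
    offset_at a (p j * d) (next cj y m) (next cj' y' m) /\
    refresh_wires_agree G j k cj cj' m y y'.
  move=> Hy; have Hn := offset_at_next cj m Hy; rewrite Hc.
  by split=> //; split=> // /Hd; symmetry; apply: offset_at_eq Hn _.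
have [Hagr Hout] :=
  foldl_refresh_agree Hstep (enum 'I_t) (ls := [::]) (tr := [::]) (tr' := [::]) I Hz.
split; last by move=> i /=; rewrite !inord_val; apply: Hout.
rewrite /ssm_block /block_labels /=; apply: agree_cat => //.
apply: agree_map => i /Hd Hi; symmetry; exact: offset_at_eq Hz Hi.
Qed.

Lemma block_agree_absorb b (D : 'I_n -> F) :
  (forall w, ~ G (LabBlock j k w)) ->
  (forall i, p' j * ssm_state x' p' c' j k i = p j * ssm_state x p c j k i + D i) ->
  (forall m, cj' m = cj m + coin_shift D b m) ->
  agree G (block_labels (j, k)) (ssm_block x p c (j, k)) (ssm_block x' p' c' (j, k)) /\
  forall i, i != b -> ssm_state x' p' c' j.+1 k i = ssm_state x p c j.+1 k i.
Proof.
move=> HG Hz Hc; split.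
  have Hstep m y y' : True -> True /\ refresh_wires_agree G j k cj cj' m y y'.
    by split=> //; split=> // /HG.
  have [Hagr _] := foldl_refresh_agree Hstep (enum 'I_t) (ls := [::]) (tr := [::])
    (tr' := [::]) (y := fun i => p j * ssm_state x p c j k i)
    (y' := fun i => p' j * ssm_state x' p' c' j k i) I I.
  rewrite /ssm_block /block_labels /=; apply: agree_cat => //.
  by apply: agree_map => i /HG.
move=> i Hib /=; rewrite !inord_val (functional_extensionality _ _ Hz).
have -> : (fun m => c' (j, k, m)) = fun m => cj m + coin_shift D b m.
  exact: functional_extensionality.
exact: refresh_coin_shift.
Qed.

End BlockAgreement.

Section Recoin.
Variables (x x' : shares) (p p' : coefs).
Variables (jfree bfree : 'I_l -> 'I_n) (a : 'I_n).
Hypothesis p'E : forall j k, j != jfree k -> p' j = p j.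
Hypothesis x'E : forall i k, i != a -> x' i k = x i k.

Definition block_input_diff (c : coins) k : 'I_n -> F := fun i =>
  p' (jfree k) * ssm_state x' p' c (jfree k) k i - p (jfree k) * ssm_state x p c (jfree k) k i.

(* In iteration [jfree k] of coordinate [k], shift the Refresh coins so that the whole
   difference between the products entering that Refresh ends up on share [bfree k]. *)
Definition recoin (c : coins) : coins :=
  [ffun jkm => if jkm.1.1 == jfree jkm.1.2
               then c jkm + coin_shift (block_input_diff c jkm.1.2) (bfree jkm.1.2) jkm.2
               else c jkm].

Lemma ssm_state_recoin c k J : (J <= jfree k)%N ->
  ssm_state x' p' (recoin c) J k = ssm_state x' p' c J k.
Proof.
move=> HJ; apply: ssm_state_ext => j m Hj; rewrite ffunE /= ifN //.
have Hjn : (j < n)%N := ltn_trans (leq_trans Hj HJ) (ltn_ord _).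
by apply/eqP => E; move: (leq_trans Hj HJ); rewrite -E inordK // ltnn.
Qed.

(* The shift only depends on coins of earlier iterations, which [recoin] leaves unchanged. *)
Lemma recoin_inj : injective recoin.
Proof.
move=> c1 c2 E.
have Ein jkm : jkm.1.1 != jfree jkm.1.2 -> c1 jkm = c2 jkm.
  by move=> Hj; have := congr1 (fun c : coins => c jkm) E; rewrite !ffunE (negbTE Hj).
have ED k : block_input_diff c1 k = block_input_diff c2 k.
  rewrite /block_input_diff -(ssm_state_recoin c1 (leqnn _)).
  rewrite -(ssm_state_recoin c2 (leqnn _)) E.
  rewrite (@ssm_state_ext x p c1 c2) // => j m Hj; apply: Ein => /=.
  have Hjn := ltn_trans Hj (ltn_ord (jfree k)).
  by apply/eqP => Ej; move: Hj; rewrite -Ej inordK ?ltnn.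
apply/ffunP => jkm; have := congr1 (fun c : coins => c jkm) E; rewrite !ffunE.
by case: ifP => _ //; rewrite ED; apply: addIr.
Qed.

(* Wires of iteration [j] whose values provably coincide in the two executions:
   before iteration [jfree k] everything off share [a], after it everything off
   share [bfree k], and nothing inside it. *)
Definition safe_wire (j : 'I_n) (k : 'I_l) (w : wire) : Prop :=
  if (j < jfree k)%N then wire_share w != Some a \/ x' a k = x a k
  else if j == jfree k then False else wire_share w != Some (bfree k).

Definition safe_label (L : label) : Prop :=
  match L with
  | LabX i k => x' i k = x i k
  | LabP j => p' j = p j
  | LabBlock j k w => safe_wire j k w
  end.

Definition state_offset (c : coins) k J : Prop :=
  let y := ssm_state x p c J k in
  let y' := ssm_state x' p' (recoin c) J k in
  if (J <= jfree k)%N then exists2 d, x' a k = x a k -> d = 0 & offset_at a d y y'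
  else exists d, offset_at (bfree k) d y y'.

Lemma state_offset0 c k : state_offset c k 0.
Proof.
rewrite /state_offset leq0n; exists (x' a k - x a k) => [->|i /=]; first by rewrite subrr.
by case: eqP => [->|/eqP/x'E ->]; rewrite ?addr0 // addrC subrK.
Qed.

Lemma block_agree c k (j : 'I_n) : state_offset c k j ->
  agree safe_label (block_labels (j, k)) (ssm_block x p c (j, k))
                   (ssm_block x' p' (recoin c) (j, k)) /\ state_offset c k j.+1.
Proof.
have recoinE m : j != jfree k -> recoin c (j, k, m) = c (j, k, m).
  by move=> Hj; rewrite ffunE /= (negbTE Hj).
rewrite /state_offset; case: (ltngtP j (jfree k)) => Hj.
- have Hjn : j != jfree k by rewrite neq_ltn Hj.
  case=> d Hd Hst.
  have HG w : safe_label (LabBlock j k w) -> wire_share w != Some a \/ d = 0.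
    by rewrite /= /safe_wire Hj => -[|/Hd]; [left|right].
  have [Hagr Hst'] := block_agree_offset (p'E Hjn) (recoinE ^~ Hjn) Hst HG.
  by split=> //; exists (p j * d) => // /Hd ->; rewrite mulr0.
- have Hjn : j != jfree k by rewrite neq_ltn Hj orbT.
  case=> d Hst.
  have HG w : safe_label (LabBlock j k w) -> wire_share w != Some (bfree k) \/ d = 0.
    by rewrite /= /safe_wire ltnNge (ltnW Hj) /= (negbTE Hjn); left.
  have [Hagr Hst'] := block_agree_offset (p'E Hjn) (recoinE ^~ Hjn) Hst HG.
  by split=> //; exists (p j * d).
- have {Hj} -> : j = jfree k by apply: val_inj.
  (* No offset is needed here: the Refresh of this block absorbs any difference. *)
  move=> _; have HG w : ~ safe_label (LabBlock (jfree k) k w).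
    by rewrite /= /safe_wire ltnn eqxx.
  have Hz i : p' (jfree k) * ssm_state x' p' (recoin c) (jfree k) k i =
              p (jfree k) * ssm_state x p c (jfree k) k i + block_input_diff c k i.
    by rewrite ssm_state_recoin // /block_input_diff addrC subrK.
  have Hc m : recoin c (jfree k, k, m) =
              c (jfree k, k, m) + coin_shift (block_input_diff c k) (bfree k) m.
    by rewrite ffunE /= eqxx.
  have [Hagr Hst'] := block_agree_absorb HG Hz Hc.
  split=> //; exists (ssm_state x' p' (recoin c) (jfree k).+1 k (bfree k) -
                     ssm_state x p c (jfree k).+1 k (bfree k)) => i.
  by case: eqP => [->|/eqP/Hst' ->]; rewrite ?addr0 // addrC subrK.
Qed.

Lemma state_offset_all c k J : (J <= n)%N -> state_offset c k J.
Proof.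
elim: J => [|J IH] HJ; first exact: state_offset0.
exact: (block_agree (j := Ordinal HJ) (IH (ltnW HJ))).2.
Qed.

Lemma ssm_trace_agree c : agree safe_label ssm_labels (ssm x p c).1 (ssm x' p' (recoin c)).1.
Proof.
rewrite !ssmE /ssm_labels /ssm_inputs /= -!catA; apply: agree_cat; last apply: agree_cat.
- by apply: agree_allpairs => i k /= ->.
- by apply: agree_map => j /= ->.
- apply: agree_flatten => -[j k].
  exact: (block_agree (state_offset_all c k (ltnW (ltn_ord j)))).1.
Qed.

Section Observation.
Variables (P : seq nat) (O : {set 'I_n}).
Hypothesis P_safe : forall w, w \in P -> (w < size ssm_labels)%N ->
  safe_label (nth (LabP ord0) ssm_labels w).
Hypothesis O_bfree : forall i k, i \in O -> i != bfree k.

Lemma ssm_obs_recoin c : ssm_obs P O x p c = ssm_obs P O x' p' (recoin c).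
Proof.
rewrite /ssm_obs; congr (_ ++ _).
  apply/eq_in_map => w Hw; have Hagr := ssm_trace_agree c.
  have [S1 S2] := agree_size Hagr.
  case: (ltnP w (size ssm_labels)) => Hws; first exact: agree_nth Hagr Hws (P_safe Hw Hws).
  by rewrite !nth_default ?S1 ?S2.
apply/eq_in_allpairs => i k; rewrite mem_enum => Hi _; rewrite !ssmE /=.
have := state_offset_all c k (leqnn n); rewrite /state_offset leqNgt ltn_ord /= => -[d ->].
by rewrite ifN ?addr0 // O_bfree.
Qed.

Lemma ssm_prob_recoin v : ssm_prob P O x p v = ssm_prob P O x' p' v.
Proof.
rewrite /ssm_prob -[in RHS](card_preimset _ recoin_inj); congr (_%:R / _).
by apply: eq_card => c; rewrite !inE ssm_obs_recoin.
Qed.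

End Observation.
End Recoin.

Definition probe_read (T : Type) (f : label -> option T) (w : nat) : option T :=
  if (w < size ssm_labels)%N then f (nth (LabP ord0) ssm_labels w) else None.

Section Probes.
Variables (P : seq nat) (O : {set 'I_n}).
Hypothesis PO_small : (size P + #|O| <= t)%N.

Definition block_row (k : 'I_l) (L : label) : option 'I_n :=
  if L is LabBlock j k' _ then (if k' == k then Some j else None) else None.

Definition probed_rows k := [set j in pmap (probe_read (block_row k)) P].

Definition free_row k := odflt ord0 [pick j | j \notin probed_rows k].

Definition later_share (k : 'I_l) (j0 : 'I_n) (L : label) : option 'I_n :=
  if L is LabBlock j k' w then (if (k' == k) && (j0 < j)%N then wire_share w else None)
  else None.

Definition later_shares k j0 := O :|: [set i in pmap (probe_read (later_share k j0)) P].

Definition free_share k j0 := odflt ord0 [pick i | i \notin later_shares k j0].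

(* Up to iteration [free_row k], changing [x i] only changes share [i] of coordinate [k]. *)
Definition x_read (L : label) : option 'I_n :=
  match L with
  | LabX i _ => Some i
  | LabP _ => None
  | LabBlock j k w => if (j < free_row k)%N then wire_share w else None
  end.

Definition p_read (L : label) : option 'I_n :=
  match L with LabX _ _ => None | LabP j => Some j | LabBlock j _ _ => Some j end.

Definition x_probed := [set i in pmap (probe_read x_read) P].
Definition p_probed := [set j in pmap (probe_read p_read) P].

Lemma free_row_unprobed k : free_row k \notin probed_rows k.
Proof.
apply: pick_notin; apply: leq_trans (card_set_pmap _ _) _.
by apply: leq_trans PO_small; apply: leq_addr.
Qed.

Lemma free_share_notin k j0 : free_share k j0 \notin later_shares k j0.
Proof.
apply: pick_notin; rewrite cardsU; apply: leq_trans (leq_subr _ _) _.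
by rewrite addnC; apply: leq_trans PO_small; rewrite leq_add2r card_set_pmap.
Qed.

Lemma free_share_output k j0 i : i \in O -> i != free_share k j0.
Proof.
move=> Hi; apply: contraNneq (free_share_notin k j0) => <-.
by rewrite inE Hi.
Qed.

Lemma later_wire_safe k (j0 j : 'I_n) w wr : w \in P -> (w < size ssm_labels)%N ->
  nth (LabP ord0) ssm_labels w = LabBlock j k wr -> (j0 < j)%N ->
  wire_share wr != Some (free_share k j0).
Proof.
move=> Hw Hs HL Hj; apply/eqP => E; have := free_share_notin k j0.
rewrite inE negb_or => /andP[_ /negP]; apply; apply: (mem_set_pmap Hw).
by rewrite /probe_read Hs HL /= eqxx Hj E.
Qed.

Lemma ssm_prob_x_unread (x x' : shares) (p : coefs) a v :
  a \notin x_probed -> (forall i, i != a -> x' i = x i) ->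
  ssm_prob P O x p v = ssm_prob P O x' p v.
Proof.
move=> Ha Hx.
apply: (@ssm_prob_recoin x x' p p free_row (fun k => free_share k (free_row k)) a) => //.
- by move=> i k /Hx ->.
- move=> w Hw Hs; case HL: (nth _ _ w) => [i k|j|j k wr] //=.
    case: (eqVneq i a) => [Ei|/Hx -> //]; move: Ha.
    by rewrite -Ei (mem_set_pmap Hw (i := i)) // /probe_read Hs HL.
  rewrite /safe_wire; case: ltnP => Hj.
    left; apply: contraNneq Ha => E.
    by rewrite (mem_set_pmap Hw (i := a)) // /probe_read Hs HL /= Hj E.
  case: eqP => [Ej|/eqP Hne].
    have := free_row_unprobed k; rewrite -Ej (mem_set_pmap Hw (i := j)) //.
    by rewrite /probe_read Hs HL /= eqxx.
  by apply: (later_wire_safe Hw Hs HL); rewrite ltn_neqAle Hj andbT eq_sym.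
- by move=> i k /free_share_output.
Qed.

Lemma ssm_prob_p_unread (x : shares) (p p' : coefs) j0 v :
  j0 \notin p_probed -> (forall j, j != j0 -> p' j = p j) ->
  ssm_prob P O x p v = ssm_prob P O x p' v.
Proof.
move=> Hj0 Hp.
apply: (@ssm_prob_recoin x x p p' (fun _ => j0) (fun k => free_share k j0) ord0) => //.
- by move=> j k /Hp.
- move=> w Hw Hs; case HL: (nth _ _ w) => [i k|j|j k wr] //=.
    case: (eqVneq j j0) => [Ej|/Hp -> //]; move: Hj0.
    by rewrite -Ej (mem_set_pmap Hw (i := j)) // /probe_read Hs HL.
  rewrite /safe_wire; case: ltnP => Hj; first by right.
  case: eqP => [Ej|/eqP Hne].
    by move: Hj0; rewrite -Ej (mem_set_pmap Hw (i := j)) // /probe_read Hs HL.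
  by apply: (later_wire_safe Hw Hs HL); rewrite ltn_neqAle Hj andbT eq_sym.
- by move=> i k /free_share_output.
Qed.

End Probes.
End SecScalarMult.

Theorem lemma2 (F : finFieldType) (t l : nat) (ht : (1 <= t)%N) :
  forall (P : seq nat) (O : {set 'I_t.+1}),
    (size P + #|O| <= t)%N ->
    exists (Ix Ip : {set 'I_t.+1}),
      (#|Ix| <= size P)%N /\ (#|Ip| <= size P)%N /\
      exists Sim : {ffun 'I_t.+1 -> option {ffun 'I_l -> F}} ->
                   {ffun 'I_t.+1 -> option F} -> seq F -> rat,
        forall (x : {ffun 'I_t.+1 -> {ffun 'I_l -> F}}) (p : {ffun 'I_t.+1 -> F}),
          (forall i, p i != 0) ->
          forall v : seq F, ssm_prob P O x p v = Sim (share_mask Ix x) (share_mask Ip p) v.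
Proof.
move=> P O PO_small.
exists (x_probed t l P), (p_probed t l P).
split; first exact: card_set_pmap.
split; first exact: card_set_pmap.
exists (fun mx mp v => ssm_prob P O [ffun i => odflt 0 (mx i)] [ffun j => odflt 1 (mp j)] v).
move=> x p _ v.
rewrite (eq_share_mask (Q := fun x => ssm_prob P O x p v) 0
          (fun x x' a => @ssm_prob_x_unread F t l P O PO_small x x' p a v)).
exact: (eq_share_mask (Q := fun p => ssm_prob P O _ p v) 1
          (fun p p' j0 => @ssm_prob_p_unread F t l P O PO_small _ p p' j0 v)).
Qed.
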